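(* Let $p$ be a prime, $n\ge2$, $1\le m\le n-1$, $\beta>0$, and let $G\subset G(n,n-m)$ with $|G|\gtrsim p^{\beta}$. Let $E\subset\mathbb{F}_p^n$. (1) If for every $\xi\in\mathbb{F}_p^n\setminus\{0\}$ we have $|\{W\in G:\ \xi\in W\}|\lesssim |G|p^{-\beta}$, then $\mathcal{E}(E,G')\lesssim |E||G|+|E|^2|G|p^{-\beta}$. (2) If for every $\xi\in\mathbb{F}_p^n\setminus\{0\}$ we have $|\{W\in G:\ \xi\in Per(W)\}|\lesssim |G|p^{-\beta}$, then $\mathcal{E}(E,G')\lesssim p^{-m}|G|\,(|E|^2+|E|p^{n-\beta})$.
   Context: $\mathbb{F}_p$ is the field with $p$ elements; $G(n,k)$ is the set of $k$-dimensional linear subspaces of $\mathbb{F}_p^n$. For $W\in G(n,n-m)$, $W$ has exactly $p^m$ cosets $x_{W,j}+W$, $1\le j\le p^m$. For $G\subset G(n,n-m)$, $G'$ denotes the collection of all cosets of all $W\in G$, i.e. $G'=\{x_{W,j}+W:\ W\in G,\ 1\le j\le p^m\}$. For a collection $\mathcal{A}$ of affine subspaces and $E\subset\mathbb{F}_p^n$, the energy is $\mathcal{E}(E,\mathcal{A})=\sum_{V\in\mathcal{A}}|E\cap V|^2$. For a subspace $W$, $Per(W)=\{x\in\mathbb{F}_p^n:\ x\cdot w=0\ \text{for all } w\in W\}$, where $x\cdot w=\sum_i x_iw_i$. $|J|$ denotes cardinality. $f\lesssim g$ means $f\le Cg$ with $C$ independent of $p$ and $E$; the implied constants in the conclusions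 depend on those in the hypotheses. *)

From mathcomp Require Import all_boot all_order all_algebra.


Set Implicit Arguments.
Unset Strict Implicit.
Unset Printing Implicit Defensive.

Import GRing.Theory.
Local Open Scope ring_scope.

Definition dotv (F : fieldType) (n : nat) (x w : 'rV[F]_n) : F :=
  \sum_(i < n) x 0 i * w 0 i.

Definition Per (F : finFieldType) (n : nat) (W : {vspace 'rV[F]_n}) :
  {set 'rV[F]_n} :=
  [set x | [forall w : 'rV[F]_n, (w \in W) ==> (dotv x w == 0)]].

Definition coset (F : finFieldType) (n : nat) (W : {vspace 'rV[F]_n})
  (x : 'rV[F]_n) : {set 'rV[F]_n} :=
  [set y | (y - x) \in W].

Definition cosets_coll (F : finFieldType) (n : nat)
  (G : seq {vspace 'rV[F]_n}) : {set {set 'rV[F]_n}} :=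
  \bigcup_(W <- G) [set coset W x | x : 'rV[F]_n].

Definition energy (T : finType) (E : {set T}) (A : {set {set T}}) : nat :=
  (\sum_(V in A) #|E :&: V| ^ 2)%N.

(* The energy E(E, G') is the sum over W in G of the number of pairs (x, y) in E^2
   with x - y in W.  For (1), the diagonal pairs contribute |E||G|, and each of the
   other pairs is counted by at most |G|p^-beta subspaces.  For (2), write
   N(xi) = #{(x, y) in E^2 | xi.(x - y) = 0} with q = p.  Since Per W lies in the
   hyperplane {xi | xi.z = 0} when z is in W, and meets it in at least a 1/q
   fraction otherwise, counting pairs gives
     (q - 1) |Per W| #{(x, y) in E^2 | x - y in W}
       <= (q - 1) |E|^2 + sum_(xi in Per W, xi <> 0) (q N(xi) - |E|^2).
   The excesses q N(xi) - |E|^2 are nonnegative by Cauchy-Schwarz and add up to at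
   most (q - 1) |E| q^n.  Summing over W, with |Per W| >= q^m and the bound on
   #{W | xi in Per W}, yields q^m E(E, G') <= |G||E|^2 + |G| p^-beta |E| q^n. *)

From mathcomp Require Import all_boot all_order all_algebra.
From mathcomp Require Import zify.

Set Implicit Arguments.
Unset Strict Implicit.
Unset Printing Implicit Defensive.
Import GRing.Theory.

Lemma card_le_fibre_diffs (V : finZmodType) (U : finType) (f : V -> U)
    (S K : {set V}) :
  {in S &, forall x y, f x = f y -> (x - y)%R \in K} -> #|S| <= #|U| * #|K|.
Proof.
move=> fK.
pose rep u := odflt 0%R [pick y in S | f y == u].
have repS x : x \in S -> rep (f x) \in S /\ f (rep (f x)) = f x.
  move=> xS; rewrite /rep; case: pickP => [y /andP[yS /eqP ->]|/(_ x)] //.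
  by rewrite xS eqxx.
pose g x := (f x, (x - rep (f x))%R).
have g_inj : {in S &, injective g}.
  by move=> x y _ _ [fxy]; rewrite fxy => /addIr.
rewrite -(card_in_imset g_inj) -cardsT -cardsX.
apply/subset_leq_card/subsetP => _ /imsetP[x xS ->].
have [rS frx] := repS x xS.
by rewrite !inE /=; apply: fK; rewrite ?frx.
Qed.

Lemma sum_pred1_mul (T : finType) (u : T) (g : T -> nat) :
  \sum_t (u == t) * g t = g u.
Proof.
rewrite (bigD1 u) //= eqxx mul1n big1 ?addn0 // => t tu.
by rewrite eq_sym (negbTE tu).
Qed.

Lemma leq_sqr_sum (T : finType) (a : T -> nat) :
  (\sum_t a t) ^ 2 <= #|T| * \sum_t a t ^ 2.
Proof.
have sqr_sum : (\sum_t a t) ^ 2 = \sum_s \sum_t a s * a t.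
  by rewrite expnS expn1 big_distrl; apply: eq_bigr => s _; rewrite big_distrr.
have sum_sqr2 : \sum_s \sum_t (a s ^ 2 + a t ^ 2) = 2 * (#|T| * \sum_t a t ^ 2).
  under eq_bigr do rewrite big_split /= sum_nat_const.
  by rewrite big_split /= -big_distrr /= sum_nat_const mul2n -addnn.
rewrite -(@leq_pmul2l 2) // -sum_sqr2 sqr_sum big_distrr.
apply: leq_sum => s _; rewrite big_distrr; apply: leq_sum => t _ /=.
by have [+ _] := nat_AGM2 (a s) (a t); rewrite sqrnD; lia.
Qed.

Lemma card_setI_sum (T : finType) (A B : {set T}) :
  #|A :&: B| = \sum_(x in A) (x \in B).
Proof.
rewrite -sum1_card (eq_bigl (fun x => (x \in A) && (x \in B))) => [|x]; last first.
  by rewrite inE.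
by rewrite big_mkcondr; apply: eq_bigr => x _; case: (x \in B).
Qed.

Lemma sum_nat_count (T : Type) (P : pred T) (s : seq T) :
  \sum_(t <- s) P t = count P s.
Proof. by rewrite -sum1_count [RHS]big_mkcond. Qed.

Lemma sum_nat_const_seq (T : Type) (s : seq T) (c : nat) :
  \sum_(t <- s) c = size s * c.
Proof. by rewrite big_const_seq count_predT iter_addn_0 mulnC. Qed.

Section DotProduct.
Local Open Scope ring_scope.
Variables (F : fieldType) (n : nat).
Implicit Types (x y w : 'rV[F]_n).

Lemma dotvDl x y w : dotv (x + y) w = dotv x w + dotv y w.
Proof. by rewrite /dotv -big_split; apply: eq_bigr => i _; rewrite !mxE mulrDl. Qed.

Lemma dotvZl (a : F) x w : dotv (a *: x) w = a * dotv x w.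
Proof. by rewrite /dotv big_distrr; apply: eq_bigr => i _; rewrite !mxE -mulrA. Qed.

Lemma dotvBl x y w : dotv (x - y) w = dotv x w - dotv y w.
Proof. by rewrite /dotv -sumrB; apply: eq_bigr => i _; rewrite !mxE mulrBl. Qed.

Lemma dotvBr x y w : dotv w (x - y) = dotv w x - dotv w y.
Proof. by rewrite /dotv -sumrB; apply: eq_bigr => i _; rewrite !mxE mulrBr. Qed.

Lemma dotv0l w : dotv 0 w = 0.
Proof. by rewrite /dotv big1 // => i _; rewrite mxE mul0r. Qed.

Lemma dotv0r x : dotv x 0 = 0.
Proof. by rewrite /dotv big1 // => i _; rewrite mxE mulr0. Qed.

Lemma dotv_sumr k x (c : 'I_k -> F) (b : 'I_k -> 'rV[F]_n) :
  dotv x (\sum_i c i *: b i) = \sum_i c i * dotv x (b i).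
Proof.
rewrite /dotv; under eq_bigr do rewrite summxE big_distrr.
rewrite exchange_big; apply: eq_bigr => j _; rewrite big_distrr.
by apply: eq_bigr => i _; rewrite !mxE /= mulrCA.
Qed.

End DotProduct.

Section Annihilators.
Variables (F : finFieldType) (n : nat).
Implicit Types (W : {vspace 'rV[F]_n}) (z : 'rV[F]_n).
Local Notation q := #|F|.

Definition orth z : {set 'rV[F]_n} := [set xi | dotv xi z == 0%R].

Lemma PerP W xi : reflect (forall w, w \in W -> dotv xi w = 0%R) (xi \in Per W).
Proof.
rewrite inE; apply: (iffP forallP) => [xiW w wW|xiW w].
  by apply/eqP; move/implyP: (xiW w); apply.
by apply/implyP => /xiW ->.
Qed.

Lemma mem0_Per W : 0%R \in Per W.
Proof. by apply/PerP => w _; rewrite dotv0l. Qed.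

Lemma Per_sub_orth W z : z \in W -> Per W \subset orth z.
Proof. by move=> zW; apply/subsetP => xi /PerP xiW; rewrite inE xiW. Qed.

Lemma orth0 : orth (0 : 'rV[F]_n)%R = setT.
Proof. by apply/setP => xi; rewrite !inE dotv0r eqxx. Qed.

Lemma card_F_gt1 : 1 < q.
Proof.
rewrite (cardD1 0%R) inE ltnS; apply/card_gt0P.
by exists 1%R; rewrite !inE oner_neq0.
Qed.

Lemma card_rV : #|{: 'rV[F]_n}| = q ^ n.
Proof. by rewrite card_mx mul1n. Qed.

Lemma card_rV_le_dim_Per W : q ^ n <= q ^ \dim W * #|Per W|.
Proof.
have -> : q ^ \dim W = #|{: 'rV[F]_(\dim W)}| by rewrite card_mx mul1n.
rewrite -card_rV -cardsT.
apply: (card_le_fibre_diffs (f := fun x => \row_(i < \dim W) dotv x (vbasis W)`_i)%R).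
move=> x y _ _ /rowP fxy; apply/PerP => w /coord_vbasis ->.
rewrite dotvBl !dotv_sumr -sumrB big1 // => i _.
by have := fxy i; rewrite !mxE => ->; rewrite subrr.
Qed.

Lemma expn_codim_le_card_Per m W : m <= n -> \dim W = (n - m)%N -> q ^ m <= #|Per W|.
Proof.
move=> mn dimW; have := card_rV_le_dim_Per W.
by rewrite dimW -{1}(subnK mn) expnD leq_pmul2l // expn_gt0 (ltnW card_F_gt1).
Qed.

Lemma card_Per_le_orth W z : #|Per W| <= q * #|Per W :&: orth z|.
Proof.
apply: (card_le_fibre_diffs (f := fun xi => dotv xi z)) => x y xW yW dxy.
rewrite in_setI [_ \in orth _]inE dotvBl dxy subrr eqxx andbT.
by apply/PerP => w wW; rewrite dotvBl (PerP _ _ xW) // (PerP _ _ yW) // subrr.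
Qed.

Lemma card_orth_le z : z != 0%R -> q * #|orth z| <= q ^ n.
Proof.
move=> z0; have [j zj] : exists j, (z 0 j != 0)%R.
  apply/existsP; apply: contraR z0 => /existsPn z0.
  by apply/eqP/rowP => j; rewrite mxE; apply/eqP/negPn.
pose x0 : 'rV[F]_n := ((z 0 j)^-1 *: delta_mx 0 j)%R.
have dot_x0 : dotv x0 z = 1%R.
  rewrite /dotv (bigD1 j) //= big1 => [|i ij]; last first.
    by rewrite !mxE (negbTE ij) andbF mulr0 mul0r.
  by rewrite !mxE !eqxx mulr1 mulVf // addr0.
clearbody x0.
pose g (u : F * 'rV[F]_n) := (u.2 + u.1 *: x0)%R.
have g_inj : {in setX [set: F] (orth z) &, injective g}.
  move=> [t k] [t' k']; rewrite !inE /= => /eqP kz /eqP k'z gtk.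
  have := congr1 (fun v => dotv v z) gtk; rewrite /g /= !dotvDl !dotvZl dot_x0 kz k'z.
  by rewrite !add0r !mulr1 => tt'; move: gtk; rewrite /g /= tt' => /addIr ->.
by rewrite -card_rV -[q]cardsT -cardsX -(card_in_imset g_inj) max_card.
Qed.

End Annihilators.

Section CosetEnergy.
Variables (F : finFieldType) (n : nat).
Implicit Types (W : {vspace 'rV[F]_n}) (E : {set 'rV[F]_n}) (G : seq {vspace 'rV[F]_n}).

Lemma mem_coset_self W x : x \in coset W x.
Proof. by rewrite inE subrr mem0v. Qed.

Lemma coset_eq W a x : x \in coset W a -> coset W a = coset W x.
Proof.
rewrite inE => xa; apply/setP => u; rewrite !inE.
by rewrite -[(u - a)%R](subrKA x) rpredDr.
Qed.

Lemma coset_inj W W' a b : coset W a = coset W' b -> W = W'.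
Proof.
move=> eqWW'; have : a \in coset W' b by rewrite -eqWW' mem_coset_self.
rewrite inE => ab; apply/vspaceP => w.
have <- : ((a + w)%R \in coset W a) = (w \in W) by rewrite inE addrC addKr.
by rewrite eqWW' inE addrAC addrC rpredDr.
Qed.

Definition coset_pairs W E : nat :=
  \sum_(x in E) \sum_(y in E) ((x - y)%R \in W).

Lemma energy_cosets W E :
  energy E [set coset W x | x : 'rV[F]_n] = coset_pairs W E.
Proof.
rewrite /energy; under eq_bigr do rewrite card_setI_sum expnS expn1 big_distrl.
under eq_bigr do (under eq_bigr do rewrite big_distrr /=).
rewrite exchange_big; apply: eq_bigr => x xE; rewrite exchange_big.
apply: eq_bigr => y yE; rewrite (bigD1 (coset W x)) /=; last exact: imset_f.
rewrite big1 => [|_ /andP[/imsetP[a _ ->] ax]]; last first.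
  by case: (boolP (x \in coset W a)) => // /coset_eq xa; rewrite xa eqxx in ax.
by rewrite mem_coset_self inE -opprB rpredN mul1n addn0.
Qed.

Lemma mem_cosets_coll G V :
  V \in cosets_coll G -> exists2 W, W \in G & exists a, V = coset W a.
Proof.
elim: G => [|W G IH]; rewrite /cosets_coll ?big_nil ?big_cons ?inE //.
case/orP => [/imsetP[a _ ->]|/IH[W' W'G VW']].
  by exists W; [rewrite mem_head | exists a].
by exists W' => //; rewrite inE W'G orbT.
Qed.

Lemma energy_cosets_coll G E :
  uniq G -> energy E (cosets_coll G) = \sum_(W <- G) coset_pairs W E.
Proof.
elim: G => [|W G IH] /=; first by rewrite /energy /cosets_coll !big_nil big_set0.
case/andP => WG uG; rewrite big_cons -IH // -energy_cosets /energy.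
rewrite /cosets_coll big_cons -/(cosets_coll G).
set B := [set coset W x | x : 'rV[F]_n].
rewrite (eq_bigl [predU B & cosets_coll G]) => [|V]; last by rewrite !inE.
rewrite bigU // disjoint_subset; apply/subsetP => _ /imsetP[a _ ->].
rewrite inE; apply/negP => /mem_cosets_coll[W' W'G [b /coset_inj eqWW']].
by rewrite eqWW' W'G in WG.
Qed.

Lemma sum_coset_pairs G E :
  \sum_(W <- G) coset_pairs W E
    = \sum_(x in E) (size G + \sum_(y in E | y != x) count (fun W => (x - y)%R \in W) G).
Proof.
rewrite exchange_big; apply: eq_bigr => x xE; rewrite exchange_big (bigD1 x) //=.
rewrite subrr sum_nat_count (@eq_count _ _ predT) ?count_predT => [|W]; last first.
  by rewrite mem0v.
by congr (_ + _); apply: eq_bigr => y _; rewrite sum_nat_count.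
Qed.

End CosetEnergy.

Section OrthogonalPairs.
Variables (F : finFieldType) (n : nat) (E : {set 'rV[F]_n}).
Implicit Types (W : {vspace 'rV[F]_n}) (xi : 'rV[F]_n).
Local Notation q := #|F|.

Definition orth_pairs xi : nat :=
  \sum_(x in E) \sum_(y in E) (xi \in orth (x - y)%R).

(* The subtraction never truncates, see [orth_pairs_excess]. *)
Definition excess xi : nat := q * orth_pairs xi - #|E| ^ 2.

Lemma sqr_card_le_orth_pairs xi : #|E| ^ 2 <= q * orth_pairs xi.
Proof.
pose a t := \sum_(x in E) (dotv xi x == t).
have sum_a : #|E| = \sum_t a t.
  rewrite -sum1_card exchange_big; apply: eq_bigr => x _.
  by rewrite -[LHS](sum_pred1_mul (dotv xi x) (fun=> 1)); apply: eq_bigr => t _; rewrite muln1.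
have sum_a2 : orth_pairs xi = \sum_t a t ^ 2.
  under [RHS]eq_bigr do rewrite expnS expn1 big_distrl /=.
  under [RHS]eq_bigr do (under eq_bigr do rewrite big_distrr /=).
  rewrite [RHS]exchange_big; apply: eq_bigr => x _.
  rewrite exchange_big; apply: eq_bigr => y _ /=.
  by rewrite sum_pred1_mul inE dotvBr subr_eq0 eq_sym.
by rewrite sum_a sum_a2 leq_sqr_sum.
Qed.

Lemma orth_pairs0 : orth_pairs 0%R = #|E| ^ 2.
Proof.
rewrite /orth_pairs; under eq_bigr do (under eq_bigr do rewrite inE dotv0l eqxx).
by under eq_bigr do rewrite sum1_card; rewrite sum_nat_const mulnn.
Qed.

Lemma orth_pairs_excess xi : q * orth_pairs xi = #|E| ^ 2 + excess xi.
Proof. by rewrite subnKC // sqr_card_le_orth_pairs. Qed.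

Lemma excess0 : excess 0%R = (q - 1) * #|E| ^ 2.
Proof. by rewrite /excess orth_pairs0 mulnBl mul1n. Qed.

Lemma sum_orth_pairs (S : {set 'rV[F]_n}) :
  \sum_(xi in S) orth_pairs xi = \sum_(x in E) \sum_(y in E) #|S :&: orth (x - y)%R|.
Proof.
rewrite exchange_big; apply: eq_bigr => x _; rewrite exchange_big.
by apply: eq_bigr => y _; rewrite card_setI_sum.
Qed.

Lemma coset_pairs_Per_le W :
  (q - 1) * #|Per W| * coset_pairs W E + #|Per W| * #|E| ^ 2
    <= \sum_(xi in Per W) q * orth_pairs xi.
Proof.
have sqrE : #|E| ^ 2 = \sum_(x in E) \sum_(y in E) 1.
  by under eq_bigr do rewrite sum1_card; rewrite sum_nat_const mulnn.
rewrite -big_distrr sum_orth_pairs /coset_pairs sqrE !big_distrr -big_split.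
apply: leq_sum => x _; rewrite !big_distrr -big_split; apply: leq_sum => y _ /=.
case: (boolP ((x - y)%R \in W)) => [xyW|_]; last first.
  by rewrite muln0 add0n muln1 card_Per_le_orth.
rewrite (setIidPl (Per_sub_orth xyW)) !muln1 -{2}[#|Per W|]mul1n -mulnDl.
by rewrite subnK // ltnW // card_F_gt1.
Qed.

Lemma coset_pairs_Per_excess W :
  (q - 1) * #|Per W| * coset_pairs W E
    <= (q - 1) * #|E| ^ 2 + \sum_(xi | xi != 0%R) (xi \in Per W) * excess xi.
Proof.
have := coset_pairs_Per_le W.
under eq_bigr do rewrite orth_pairs_excess.
rewrite big_split /= sum_nat_const big_mkcond (bigD1 0%R) //= mem0_Per excess0.
rewrite addnC leq_add2l; congr (_ <= _ + _); apply: eq_bigr => xi _.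
by case: (xi \in Per W); rewrite ?mul1n.
Qed.

Lemma sum_coset_pairs_le_excess m (G : seq {vspace 'rV[F]_n}) :
    m <= n -> (forall W, W \in G -> \dim W = (n - m)%N) ->
  (q - 1) * q ^ m * \sum_(W <- G) coset_pairs W E
    <= (q - 1) * size G * #|E| ^ 2
       + \sum_(xi | xi != 0%R) count (fun W => xi \in Per W) G * excess xi.
Proof.
move=> mn dimG; rewrite big_distrr /=.
apply: (@leq_trans (\sum_(W <- G) ((q - 1) * #|E| ^ 2
          + \sum_(xi | xi != 0%R) (xi \in Per W) * excess xi))).
  rewrite big_seq_cond [leqRHS]big_seq_cond; apply: leq_sum => W /andP[WG _].
  apply: leq_trans (coset_pairs_Per_excess W).
  by rewrite leq_mul2r leq_mul2l expn_codim_le_card_Per ?dimG ?orbT.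
rewrite big_split /= sum_nat_const_seq mulnCA mulnA exchange_big /=.
by under eq_bigr do rewrite -big_distrl /= sum_nat_count.
Qed.

Lemma sum_excess_le : \sum_xi excess xi <= (q - 1) * #|E| * q ^ n.
Proof.
have sum_orth_excess : \sum_xi q * orth_pairs xi = q ^ n * #|E| ^ 2 + \sum_xi excess xi.
  under eq_bigr do rewrite orth_pairs_excess.
  by rewrite big_split /= sum_nat_const card_rV.
have row_bound x : x \in E ->
    \sum_(y in E) q * #|orth (x - y)%R| + q ^ n <= (q + #|E|) * q ^ n.
  move=> xE; rewrite mulnDl -sum_nat_const !(bigD1 x xE) /=.
  rewrite subrr orth0 cardsT card_rV -addnA leq_add2l addnC leq_add2l.
  apply: leq_sum => y /andP[_ yx]; apply: card_orth_le.
  by rewrite subr_eq0 eq_sym.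
have total : \sum_xi q * orth_pairs xi + #|E| * q ^ n <= #|E| * ((q + #|E|) * q ^ n).
  rewrite -big_distrr /= (eq_bigl (mem [set: 'rV[F]_n])) => [|xi]; last by rewrite /= in_setT.
  rewrite sum_orth_pairs big_distrr -sum_nat_const -big_split /= -sum_nat_const.
  apply: leq_sum => x xE; rewrite big_distrr /=.
  by under eq_bigr do rewrite setTI; apply: row_bound.
rewrite sum_orth_excess in total.
have := card_F_gt1 F; nia.
Qed.

End OrthogonalPairs.

(* Loaded only here: [Reals] takes over the [%R] delimiter, which denotes
   [ring_scope] above. *)
From Stdlib Require Import Reals Lra.

Section EnergyBounds.
Local Open Scope R_scope.

Lemma INR_sum_le (I : finType) (P : pred I) (f g : I -> nat) (B : R) :
  (forall i, P i -> INR (f i) <= B * INR (g i)) ->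
  INR (\sum_(i | P i) f i)%nat <= B * INR (\sum_(i | P i) g i)%nat.
Proof.
move=> fg; apply: (big_rec2 (fun a b => INR a <= B * INR b)) => [|i a b Pi ab].
  by rewrite /= Rmult_0_r; apply: Rle_refl.
by rewrite !plus_INR Rmult_plus_distr_l; apply: Rplus_le_compat; [apply: fg|].
Qed.

Lemma INR_expn (a k : nat) : INR (expn a k) = INR a ^ k.
Proof. by elim: k => // k IH; rewrite expnS mult_INR IH. Qed.

Lemma scale_incidence_bound (c e g b x : R) :
    0 <= c -> 0 <= e -> 0 <= g -> 0 <= b ->
  x <= e * g + e ^ 2 * (c * g * b) -> x <= (1 + c) * (e * g + e ^ 2 * g * b).
Proof.
move=> c_ge0 e_ge0 g_ge0 b_ge0.
have := Rmult_le_pos _ _ c_ge0 (Rmult_le_pos _ _ e_ge0 g_ge0).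
have := Rmult_le_pos _ _ (Rmult_le_pos _ _ (pow_le _ 2 e_ge0) g_ge0) b_ge0.
lra.
Qed.

Lemma scale_annihilator_bound (c e g beta P x : R) (m n : nat) :
    0 <= c -> 0 <= e -> 0 <= g -> 0 < P ->
    P ^ m * x <= g * e ^ 2 + c * g * Rpower P (- beta) * e * P ^ n ->
  x <= (1 + c) * (Rpower P (- INR m) * g * (e ^ 2 + e * Rpower P (INR n - beta))).
Proof.
move=> c_ge0 e_ge0 g_ge0 P_gt0 bound.
have Pm_gt0 := pow_lt _ m P_gt0.
rewrite Rpower_Ropp /Rminus Rpower_plus !Rpower_pow //.
apply: (Rmult_le_reg_l _ _ _ Pm_gt0).
rewrite [X in _ <= X](_ : _ = (1 + c) * (g * e ^ 2 + g * e * P ^ n * Rpower P (- beta))).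
  2: by field; lra.
have := Rmult_le_pos _ _ (Rmult_le_pos _ _ (Rmult_le_pos _ _ g_ge0 e_ge0)
          (pow_le _ n (Rlt_le _ _ P_gt0))) (Rlt_le _ _ (exp_pos (- beta * ln P))).
have := Rmult_le_pos _ _ c_ge0 (Rmult_le_pos _ _ g_ge0 (pow_le _ 2 e_ge0)).
rewrite /Rpower in bound *.
nra.
Qed.

Variables (F : finFieldType) (n : nat) (E : {set 'rV[F]_n}).
Variables (G : seq {vspace 'rV[F]_n}) (B : R).
Hypotheses (G_uniq : uniq G) (B_ge0 : 0 <= B).
Implicit Types (xi : 'rV[F]_n) (W : {vspace 'rV[F]_n}).
Local Notation q := #|F|.

Lemma energy_le_incidence :
  (forall xi, xi != GRing.zero -> INR (count (fun W => xi \in W) G) <= B) ->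
  INR (energy E (cosets_coll G)) <= INR #|E| * INR (size G) + INR #|E| ^ 2 * B.
Proof.
move=> incidence; rewrite energy_cosets_coll // sum_coset_pairs.
apply: (Rle_trans _ _ _ (INR_sum_le (g := fun=> 1%nat)
                          (B := INR (size G) + B * INR #|E|) _)) => [x _|].
  rewrite plus_INR Rmult_1_r; apply: Rplus_le_compat_l.
  apply: (Rle_trans _ (B * INR (\sum_(y in E | y != x) 1)%nat)).
    apply: INR_sum_le => y /andP[_ yx]; rewrite Rmult_1_r.
    by apply: incidence; rewrite subr_eq0 eq_sym.
  apply/Rmult_le_compat_l/le_INR/leP => //.
  by rewrite sum1dep_card subset_leq_card //; apply/subsetP => y; rewrite inE => /andP[].
rewrite sum1_card; have := pos_INR #|E|; nra.
Qed.

Lemma energy_le_annihilator m :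
    (m <= n)%nat -> (forall W, W \in G -> \dim W = (n - m)%nat) ->
    (forall xi, xi != GRing.zero -> INR (count (fun W => xi \in Per W) G) <= B) ->
  INR q ^ m * INR (energy E (cosets_coll G))
    <= INR (size G) * INR #|E| ^ 2 + B * INR #|E| * INR q ^ n.
Proof.
move=> mn dimG annihilator; rewrite energy_cosets_coll //.
have nat_bound := le_INR _ _ (leP (sum_coset_pairs_le_excess E mn dimG)).
have weighted : INR (\sum_(xi | xi != GRing.zero)
        count (fun W => xi \in Per W) G * excess E xi)%nat
    <= B * INR (\sum_(xi | xi != GRing.zero) excess E xi)%nat.
  apply: INR_sum_le => xi xi0; rewrite mult_INR.
  by apply: Rmult_le_compat_r; [apply: pos_INR | apply: annihilator].
have excess_bound : INR (\sum_(xi | xi != GRing.zero) excess E xi)%nat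
    <= INR (q - 1) * INR #|E| * INR q ^ n.
  rewrite -INR_expn -!mult_INR; apply/le_INR/leP/(leq_trans _ (sum_excess_le E)).
  by rewrite [leqRHS](bigD1 GRing.zero) //= leq_addl.
have q1_gt0 : 0 < INR (q - 1) by apply/lt_0_INR/ltP; rewrite subn_gt0 card_F_gt1.
rewrite plus_INR !mult_INR !INR_expn in nat_bound.
apply: (Rmult_le_reg_l _ _ _ q1_gt0).
have := pos_INR (\sum_(W <- G) coset_pairs W E).
have := pos_INR #|E|; have := pow_le _ n (pos_INR q).
nra.
Qed.

End EnergyBounds.

Theorem lemma2p3 (n m : nat) (beta C1 C2 : R) :
  (2 <= n)%N -> (1 <= m)%N -> (m <= n - 1)%N -> (0 < beta)%R ->
  (0 < C1)%R -> (0 <= C2)%R ->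
  exists C : R, (0 <= C)%R /\
  forall (p : nat) (G : seq {vspace 'rV['F_p]_n}) (E : {set 'rV['F_p]_n}),
    prime p ->
    uniq G ->
    (forall W, W \in G -> \dim W = (n - m)%N) ->
    (INR (size G) >= C1 * Rpower (INR p) beta)%R ->
    ((forall xi : 'rV['F_p]_n, xi != GRing.zero ->
        (INR (count (fun W : {vspace 'rV['F_p]_n} => xi \in W) G)
           <= C2 * INR (size G) * Rpower (INR p) (- beta))%R) ->
      (INR (energy E (cosets_coll G))
         <= C * (INR #|E| * INR (size G)
                 + INR #|E| ^ 2 * INR (size G) * Rpower (INR p) (- beta)))%R)
    /\
    ((forall xi : 'rV['F_p]_n, xi != GRing.zero ->
        (INR (count (fun W : {vspace 'rV['F_p]_n} => xi \in Per W) G)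
           <= C2 * INR (size G) * Rpower (INR p) (- beta))%R) ->
      (INR (energy E (cosets_coll G))
         <= C * (Rpower (INR p) (- INR m) * INR (size G)
                 * (INR #|E| ^ 2
                    + INR #|E| * Rpower (INR p) (INR n - beta))))%R).
Proof.
move=> _ _ m_lt_n _ _ C2_ge0.
exists (1 + C2)%R; split => [|p G E p_prime G_uniq dimG _]; first lra.
have p_gt0 : (0 < INR p)%R by apply/lt_0_INR/ltP/prime_gt0.
have b_gt0 : (0 < Rpower (INR p) (- beta))%R by apply: exp_pos.
have B_ge0 : (0 <= C2 * INR (size G) * Rpower (INR p) (- beta))%R.
  by apply/Rmult_le_pos/Rlt_le/b_gt0/Rmult_le_pos/pos_INR.
have [e_ge0 g_ge0] := (pos_INR #|E|, pos_INR (size G)).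
split => [incidence | annihilator].
  apply: scale_incidence_bound (energy_le_incidence E G_uniq B_ge0 incidence) => //.
  exact: Rlt_le.
have m_le_n : (m <= n)%nat by apply: leq_trans m_lt_n (leq_subr 1 n).
have := energy_le_annihilator E G_uniq B_ge0 m_le_n dimG annihilator.
by rewrite card_Fp // => /scale_annihilator_bound; apply.
Qed.
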